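(* Let $G$ be a locally compact abelian group with compact identity component. Then the Braconnier modular function $\mathrm{mod}_G$ takes values in $\mathbb Q$.
   Context: The Braconnier modular function $\mathrm{mod}_G:\mathrm{Aut}(G)\to(0,\infty)$ is defined by $\mu(\alpha(S))=\mathrm{mod}_G(\alpha)\mu(S)$ for a Haar measure $\mu$ on $G$, all $\alpha\in\mathrm{Aut}(G)$ (bicontinuous automorphisms) and Borel sets $S$. *)

From HB Require Import structures.
From mathcomp Require Import all_boot all_order all_algebra.
From mathcomp Require Import all_classical all_reals all_analysis.
Set Implicit Arguments. Unset Strict Implicit. Unset Printing Implicit Defensive.
Import Order.TTheory GRing.Theory Num.Theory.
Local Open Scope classical_set_scope.
Local Open Scope ring_scope.

Definition LCA_group (G : topologicalZmodType) : Prop :=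
  hausdorff_space G /\ locally_compact [set: G].

Definition identity_component (G : topologicalZmodType) : set G :=
  connected_component [set: G] 0.

Definition pointed_group (G : topologicalZmodType) : pointedType :=
  HB.pack_for pointedType G (isPointed.Build G 0).

Definition Borel (G : topologicalZmodType) :=
  @g_sigma_algebraType (pointed_group G) (@open G).

Definition haar_measure (R : realType) (G : topologicalZmodType)
    (mu : {measure set (Borel G) -> \bar R}) : Prop :=
  [/\ (forall K : set G, compact K -> (mu K < +oo)%E),
      (forall E : set (Borel G), measurable E ->
         mu E = ereal_inf [set mu U | U in [set U : set G | open U /\ E `<=` U]]),
      (forall U : set G, open U ->
         mu U = ereal_sup [set mu K | K in [set K : set G | compact K /\ K `<=` U]]),
      (exists U : set G, open U /\ (0 < mu U)%E) &
      (forall (x : G) (E : set (Borel G)), measurable E ->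
         mu [set x + y | y in E] = mu E)].

Definition topological_automorphism (G : topologicalZmodType) (alpha : G -> G) : Prop :=
  (forall x y : G, alpha (x + y) = alpha x + alpha y) /\
  continuous alpha /\
  exists beta : G -> G,
    [/\ cancel alpha beta, cancel beta alpha & continuous beta].

(* Since the identity component is compact, G has a compact open subgroup H:
   a compact neighbourhood W of the identity component is a compact Hausdorff
   space in which the quasi-component of 0 is connected (Sura-Bura), so some
   relatively clopen subset of W around 0 is already open in G, and the
   stabiliser of such a compact open set is a compact open subgroup.
   Then alpha H is a compact open subgroup too, and V = H `&` alpha H is an
   open subgroup of finite index m in H and n in alpha H, with 0 < mu V < oo.
   Translation invariance gives mu H = m mu V and mu (alpha H) = n mu V, so
   mod_G alpha = mu (alpha H) / mu H = n / m. *)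

From HB Require Import structures.
From mathcomp Require Import all_boot all_order all_algebra.
From mathcomp Require Import all_classical all_reals all_analysis.
From mathcomp Require Import finmap.
Import Order.TTheory GRing.Theory Num.Theory.
Local Open Scope classical_set_scope.
Local Open Scope ring_scope.

Section compact_separation.
Context {T : topologicalType}.

(* [compact_cover] is only proved for pointed spaces. *)
Lemma compact_cover_compact {A : set T} : compact A -> cover_compact A.
Proof.
move=> cA; have [[a Aa]|A0] := pselect (A !=set0).
  pose Ta := HB.pack_for ptopologicalType T (isPointed.Build T a).
  by have : @compact Ta A by []; rewrite compact_cover.
by move=> I D f _ _; exists fset0 => // x Ax; exfalso; apply: A0; exists x.
Qed.

Lemma open_bigcap_fset (I : choiceType) (D : {fset I}) (f : I -> set T) :
  (forall i, i \in D -> open (f i)) -> open (\bigcap_(i in [set` D]) f i).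
Proof.
move=> fo; rewrite openE => p Dp; apply: filter_bigI => i iD.
by apply: open_nbhs_nbhs; split; [exact: fo | exact: Dp].
Qed.

Lemma compact_separation (K B : set T) : compact K ->
  (forall x, K x -> exists U V : set T,
     [/\ open U, open V, U x, B `<=` V & U `&` V = set0]) ->
  exists U V : set T, [/\ open U, open V, K `<=` U, B `<=` V & U `&` V = set0].
Proof.
move=> cK sepK.
have /choice[g gP] : forall x, exists UV : set T * set T, K x ->
    [/\ open UV.1, open UV.2, UV.1 x, B `<=` UV.2 & UV.1 `&` UV.2 = set0].
  move=> x; have [Kx|nKx] := pselect (K x); last by exists (set0, set0).
  by have [U [V sepUV]] := sepK x Kx; exists (U, V).
have [] := compact_cover_compact cK _ K (fun x => (g x).1).
- by move=> x /gP[].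
- by move=> x Kx; exists x => //; case: (gP x Kx).
move=> D /(_ _ _)/set_mem DK KD.
exists (\bigcup_(x in [set` D]) (g x).1), (\bigcap_(x in [set` D]) (g x).2).
split => //.
- by apply: bigcup_open => x /DK /gP[].
- by apply: open_bigcap_fset => x /DK /gP[].
- by move=> z Bz x /DK /gP[_ _ _ + _]; apply.
- rewrite -subset0 => z [[x xD gxz] Dz].
  by have [_ _ _ _ <-] := gP x (DK x xD); split; last exact: Dz.
Qed.

Hypothesis hT : hausdorff_space T.

Lemma hausdorff_compact_point_separation (K : set T) (y : T) :
  compact K -> ~ K y ->
  exists U V : set T, [/\ open U, open V, K `<=` U, V y & U `&` V = set0].
Proof.
move=> cK Ky; have [U [V [oU oV KU yV UV]]] : exists U V : set T,
    [/\ open U, open V, K `<=` U, [set y] `<=` V & U `&` V = set0].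
  apply: compact_separation => // x Kx.
  have /eqP xy : x <> y by move=> xy; apply: Ky; rewrite -xy.
  move: hT; rewrite open_hausdorff => /(_ x y xy) [[U V] [/set_mem xU /set_mem yV]].
  by move=> [oU oV /eqP UV]; exists U, V; split => // _ ->.
by exists U, V; split => //; exact: yV.
Qed.

Lemma hausdorff_compact_separation (K L : set T) :
  compact K -> compact L -> K `&` L = set0 ->
  exists U V : set T, [/\ open U, open V, K `<=` U, L `<=` V & U `&` V = set0].
Proof.
move=> cK cL KL; have [V [U [oV oU LV KU VU]]] : exists V U : set T,
    [/\ open V, open U, L `<=` V, K `<=` U & V `&` U = set0].
  apply: compact_separation => // y Ly.
  have Ky : ~ K y by move=> Ky; rewrite -[False]/(set0 y) -KL.
  have [U [V [oU oV KU Vy UV]]] := hausdorff_compact_point_separation _ _ cK Ky.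
  by exists V, U; rewrite setIC.
by exists U, V; rewrite setIC.
Qed.

End compact_separation.

Lemma locally_compact_compact_nbhs {T : topologicalType} (K : set T) :
  locally_compact [set: T] -> compact K ->
  exists2 W : set T, compact W & K `<=` W°.
Proof.
move=> lc cK.
have /choice[g gP] : forall x : T, exists U : set T, nbhs x U /\ compact U.
  move=> x; have [U xU [cU _]] := lc x I.
  by exists U; split => //; move: xU; rewrite withinET.
have [] := compact_cover_compact cK _ K (fun x => (g x)°).
- by move=> x _; exact: open_interior.
- by move=> x Kx; exists x => //; exact: (gP x).1.
move=> D _ KD; exists (\bigcup_(x in [set` D]) g x).
  by rewrite bigcup_fset; apply: bigsetU_compact => x _; exact: (gP x).2.
by move=> z /KD [x xD gxz]; apply: filterS gxz => w gxw; exists x.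
Qed.

(* For closed [W], these are exactly the clopen subsets of the subspace [W]. *)
Definition rel_clopen {T : topologicalType} (W A : set T) :=
  [/\ A `<=` W, closed A & closed (W `\` A)].

Definition quasi_component {T : topologicalType} (W : set T) (x : T) :=
  \bigcap_(A in [set A | rel_clopen W A /\ A x]) A.

Section quasi_component.
Context {T : topologicalType} {W : set T} {x0 : T}.
Hypotheses (hT : hausdorff_space T) (cW : compact W) (Wx0 : W x0).

Let clW : closed W := compact_closed hT cW.
Local Notation Q := (quasi_component W x0).

Lemma quasi_component_refl : Q x0.
Proof. by move=> A [_]. Qed.

Lemma quasi_component_compact : compact Q.
Proof.
apply: (subclosed_compact _ cW); first by apply: closed_bigI => A [[]].
by move=> z; apply; split => //; split => //; rewrite setDv; exact: closed0.
Qed.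

Lemma rel_clopen_bigcap (D : {fset set T}) :
  (forall A, A \in D -> rel_clopen W A) ->
  rel_clopen W (W `&` \bigcap_(A in [set` D]) A).
Proof.
move=> DA; split; first by move=> z [].
  by apply: closedI => //; apply: closed_bigI => A /DA[].
rewrite setDIr setDv set0U setDE setC_bigcap setI_bigcupr.
by apply: closed_bigcup => [|A /DA[]//]; exact: finite_fset.
Qed.

Lemma rel_clopen_splitI (A U U' : set T) :
  rel_clopen W A -> open U -> open U' -> U `&` U' = set0 -> A `<=` U `|` U' ->
  rel_clopen W (A `&` U).
Proof.
move=> [AW clA clWA] oU oU' UU' AUU'.
have AUE : A `&` U = A `&` ~` U'.
  apply/seteqP; split => z [Az].
    by move=> Uz; split => // U'z; rewrite -[False]/(set0 z) -UU'.
  by move=> nU'z; split => //; case: (AUU' z Az).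
have WAUE : W `\` (A `&` U) = (W `\` A) `|` (A `&` ~` U).
  apply/seteqP; split => z.
    move=> [Wz /not_andP[nAz|nUz]]; first by left.
    by have [Az|nAz] := pselect (A z); [right|left].
  move=> [[Wz nAz]|[Az nUz]]; first by split => // -[].
  by split; [exact: AW | case].
split; first by move=> z [/AW].
  by rewrite AUE; apply: closedI => //; exact: open_closedC.
by rewrite WAUE; apply: closedU => //; apply: closedI => //; exact: open_closedC.
Qed.

Lemma quasi_component_sub_open (O : set T) :
  open O -> Q `<=` O -> exists A, [/\ rel_clopen W A, A x0 & A `<=` O].
Proof.
move=> oO QO.
have cWO : compact (W `\` O).
  apply: (subclosed_compact _ cW (@subDsetl _ _ _)).
  by apply: closedI => //; exact: open_closedC.
have [] := compact_cover_compact cWO _ [set A | rel_clopen W A /\ A x0] setC.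
- by move=> A [[_ clA _] _]; exact: closed_openC.
- move=> z [Wz nOz]; have /existsNP[A /not_implyP[DA nAz]] : ~ Q z by move/QO.
  by exists A.
move=> D /(_ _ _)/set_mem DA WOD.
exists (W `&` \bigcap_(A in [set` D]) A); split.
- by apply: rel_clopen_bigcap => A /DA[].
- by split => // A /DA[].
- move=> z [Wz Dz]; apply: contrapT => nOz.
  by have [A AD /(_ (Dz A AD))] := WOD z (conj Wz nOz).
Qed.

Lemma quasi_component_sub_disjoint_open (U U' : set T) :
  open U -> open U' -> U `&` U' = set0 -> Q `<=` U `|` U' -> U x0 -> Q `<=` U.
Proof.
move=> oU oU' UU' QUU' Ux0.
have [A [DA Ax0 AUU']] := quasi_component_sub_open _ (openU oU oU') QUU'.
move=> z Qz; suff [] : (A `&` U) z by [].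
by apply: Qz; split; [exact: rel_clopen_splitI UU' _ | split].
Qed.

Lemma quasi_component_connected : connected Q.
Proof.
have cQ := quasi_component_compact; have clQ := compact_closed hT cQ.
move=> B [b Bb] [C oC BQC] [C' clC' BQC'].
have cP1 : compact (Q `&` C').
  by apply: (subclosed_compact _ cQ (@subIsetl _ _ _)); exact: closedI.
have cP2 : compact (Q `\` C).
  apply: (subclosed_compact _ cQ (@subDsetl _ _ _)).
  by apply: closedI => //; exact: open_closedC.
have P12 : (Q `&` C') `&` (Q `\` C) = set0.
  by rewrite -BQC' -subset0 => z [+ [_]]; rewrite BQC => -[].
have [U1 [U2 [oU1 oU2 P1U1 P2U2 U12]]] :=
  hausdorff_compact_separation hT _ _ cP1 cP2 P12.
have nU12 z : U1 z -> U2 z -> False by move=> ? ?; rewrite -[False]/(set0 z) -U12.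
have QU : Q `<=` U1 `|` U2.
  move=> z Qz; have [Cz|nCz] := pselect (C z); last by right; exact: P2U2.
  by left; apply: P1U1; rewrite -BQC' BQC.
have [U1x0|U2x0] := QU x0 quasi_component_refl.
- have QU1 := quasi_component_sub_disjoint_open _ _ oU1 oU2 U12 QU U1x0.
  rewrite BQC; apply/seteqP; split => [z []//|z Qz]; split => //.
  by apply: contrapT => nCz; exact: nU12 (QU1 _ Qz) (P2U2 _ (conj Qz nCz)).
- have QU2 : Q `<=` U2.
    apply: (quasi_component_sub_disjoint_open _ _ oU2 oU1 _ _ U2x0).
      by rewrite setIC.
    by rewrite setUC.
  have [Qb C'b] : (Q `&` C') b by rewrite -BQC'.
  by have := nU12 _ (P1U1 _ (conj Qb C'b)) (QU2 _ Qb).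
Qed.

End quasi_component.

Lemma compact_open_around_component {T : topologicalType} (W : set T) (x0 : T) :
  hausdorff_space T -> compact W -> connected_component [set: T] x0 `<=` W° ->
  exists A : set T, [/\ compact A, open A & A x0].
Proof.
move=> hT cW CW; have Wx0 : W x0.
  by apply: interior_subset; apply: CW; apply: connected_component_refl.
have QC : quasi_component W x0 `<=` connected_component [set: T] x0.
  apply: connected_component_max => //; first exact: quasi_component_refl.
  exact: quasi_component_connected.
have [A [[AW clA clWA] Ax0 AW0]] :=
  quasi_component_sub_open hT cW Wx0 _ (@open_interior _ W) (subset_trans QC CW).
exists A; split => //; first exact: subclosed_compact clA cW AW.
have -> : A = W° `&` ~` (W `\` A).
  apply/seteqP; split => [z Az|z [Wz]]; first by split; [exact: AW0 | case].
  by move=> /not_andP[/(_ (interior_subset Wz))[]|/contrapT].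
by apply: openI; [exact: open_interior | exact: closed_openC].
Qed.

Section topological_group.
Context {G : topologicalZmodType}.

Definition subgroup (H : set G) := H 0 /\ forall x y, H x -> H y -> H (x - y).

Definition coset (V : set G) (x : G) := [set x + y | y in V].

Definition stabilizer (A : set G) := [set y | forall x, A x <-> A (x + y)].

Lemma subgroupN (H : set G) (x : G) : subgroup H -> H x -> H (- x).
Proof. by move=> [H0 HB] Hx; rewrite -sub0r; exact: HB. Qed.

Lemma subgroupD (H : set G) (x y : G) : subgroup H -> H x -> H y -> H (x + y).
Proof.
move=> sgH Hx Hy; rewrite -[y]opprK; apply: sgH.2 => //; exact: subgroupN.
Qed.

Lemma subgroupI (H K : set G) : subgroup H -> subgroup K -> subgroup (H `&` K).
Proof.
move=> [H0 HB] [K0 KB]; split=> // x y [Hx Kx] [Hy Ky].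
by split; [exact: HB | exact: KB].
Qed.

Lemma coset_meet_sub (V : set G) (x y : G) : subgroup V ->
  coset V x `&` coset V y !=set0 -> coset V x `<=` coset V y.
Proof.
move=> sgV [_ [[u Vu <-] [w Vw uw]]] _ [z Vz <-].
exists (w - u + z); first by apply: subgroupD => //; apply: sgV.2.
by rewrite !addrA uw addrK.
Qed.

Lemma subr_cst_continuous (h : G) : continuous (fun z : G => z - h).
Proof.
move=> z; apply: (@continuous_comp _ _ _ (fun z => (z, h)) (fun p => p.1 - p.2)).
  by apply: cvg_pair; [exact: cvg_id | exact: cvg_cst].
exact: sub_continuous.
Qed.

Lemma open_coset (V : set G) (x : G) : open V -> open (coset V x).
Proof.
have -> : coset V x = (fun z => z - x) @^-1` V.
  apply/seteqP; split => z /=; first by move=> [y Vy <-]; rewrite addrC addKr.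
  by move=> Vz; exists (z - x) => //; rewrite addrC subrK.
by have /continuousP := subr_cst_continuous x; apply.
Qed.

Lemma compact_coset_cover (K V : set G) :
  compact K -> open V -> V 0 ->
  exists s : seq G,
    (forall x, x \in s -> K x) /\ K `<=` \bigcup_(x in [set` s]) coset V x.
Proof.
move=> cK oV V0; have [] := compact_cover_compact cK _ K (coset V).
- by move=> x _; exact: open_coset.
- by move=> x Kx; exists x => //; exists 0; rewrite ?addr0.
by move=> D DK KD; exists D; split => // x /DK/set_mem.
Qed.

Lemma subgroup_nbhs0_open (H : set G) : subgroup H -> nbhs 0 H -> open H.
Proof.
move=> sgH H0; rewrite openE => y Hy.
have : nbhs y ((fun z => z - y) @^-1` H).
  by apply: subr_cst_continuous; rewrite subrr.
by apply: filterS => z /= Hzy; rewrite -(subrK y z); exact: subgroupD.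
Qed.

Lemma open_subgroup_closed (H : set G) : subgroup H -> open H -> closed H.
Proof.
move=> sgH oH; rewrite -openC openE => y nHy.
apply: (@filterS _ _ _ (coset H y)); last first.
  apply: open_nbhs_nbhs; split; first exact: open_coset.
  by exists 0; [exact: sgH.1 | rewrite addr0].
move=> _ [h Hh <-] Hyh; apply: nHy.
by rewrite -(addrK h y); exact: sgH.2.
Qed.

Lemma compact_open_add_nbhs0 (A : set G) : compact A -> open A ->
  exists2 V : set G, nbhs 0 V & forall x v, A x -> V v -> A (x + v).
Proof.
move=> cA oA.
have /choice[g gP] : forall a, exists PQ : set G * set G, A a ->
    [/\ nbhs a PQ.1, nbhs 0 PQ.2 & forall x v, PQ.1 x -> PQ.2 v -> A (x + v)].
  move=> a; have [Aa|nAa] := pselect (A a); last by exists (set0, set0).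
  have : nbhs (a + 0) A by rewrite addr0; exact: open_nbhs_nbhs.
  move=> /(@add_continuous G (a, 0)) [[P Q]] /= [Pa Q0] PQ.
  by exists (P, Q) => _; split => // x v Px Qv; exact: (PQ (x, v)).
have [] := compact_cover_compact cA _ A (fun a => (g a).1°).
- by move=> a _; exact: open_interior.
- by move=> a Aa; exists a => //; case: (gP a Aa).
move=> D /(_ _ _)/set_mem DA AD.
exists (\bigcap_(a in [set` D]) (g a).2).
  by apply: filter_bigI => a /DA /gP[].
move=> x v /AD [a aD gax] Dv.
by have [_ _] := gP a (DA a aD); apply; [exact: interior_subset | exact: Dv].
Qed.

Lemma stabilizer_subgroup (A : set G) : subgroup (stabilizer A).
Proof.
split=> [x|y z Hy Hz x]; first by rewrite addr0.
have -> : x + (y - z) = x - z + y by rewrite addrCA addrC.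
by rewrite -(Hy (x - z)) (Hz (x - z)) subrK.
Qed.

Lemma stabilizer_sub (A : set G) : A 0 -> stabilizer A `<=` A.
Proof. by move=> A0 y /(_ 0); rewrite add0r => /iffLR; apply. Qed.

Lemma compact_open_stabilizer_open (A : set G) :
  compact A -> open A -> open (stabilizer A).
Proof.
move=> cA oA; have [V V0 AV] := compact_open_add_nbhs0 _ cA oA.
apply: subgroup_nbhs0_open; first exact: stabilizer_subgroup.
have NV0 : nbhs 0 (-%R @^-1` V).
  have : nbhs (- (0 : G)) V by rewrite oppr0.
  exact: (@opp_continuous G 0).
apply: filterS (filterI V0 NV0) => v [Vv NVv] x; split => [Ax|]; first exact: AV.
by move=> /AV /(_ NVv); rewrite addrK.
Qed.

Lemma stabilizer_compact (A : set G) :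
  compact A -> open A -> A 0 -> compact (stabilizer A).
Proof.
move=> cA oA A0; apply: (subclosed_compact _ cA (stabilizer_sub _ A0)).
apply: open_subgroup_closed (stabilizer_subgroup A) _.
exact: compact_open_stabilizer_open _ cA oA.
Qed.

Lemma automorphism_compact_open_subgroup (alpha : G -> G) (H : set G) :
  topological_automorphism alpha -> compact H -> open H -> subgroup H ->
  [/\ compact (alpha @` H), open (alpha @` H) & subgroup (alpha @` H)].
Proof.
move=> [alphaD [alpha_cont [beta [alphaK betaK beta_cont]]]] cH oH [H0 HB].
have alphaB x y : alpha (x - y) = alpha x - alpha y.
  by apply: (addIr (alpha y)); rewrite -alphaD !subrK.
split.
- by apply: continuous_compact => //; exact: continuous_subspaceT.
- have -> : alpha @` H = beta @^-1` H.
    apply/seteqP; split => z /=; first by move=> [y Hy <-]; rewrite alphaK.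
    by move=> Hbz; exists (beta z) => //; rewrite betaK.
  by move/continuousP : beta_cont; apply.
- split; first by exists 0 => //; rewrite -(subrr (0 : G)) alphaB !subrr.
  by move=> _ _ [x Hx <-] [y Hy <-]; exists (x - y); [exact: HB | exact: alphaB].
Qed.

End topological_group.

Lemma LCA_compact_open_subgroup {G : topologicalZmodType} :
  LCA_group G -> compact (@identity_component G) ->
  exists H : set G, [/\ compact H, open H & subgroup H].
Proof.
move=> [hG lc] cG0; have [W cW G0W] := locally_compact_compact_nbhs _ lc cG0.
have [A [cA oA A0]] := compact_open_around_component _ _ hG cW G0W.
exists (stabilizer A); split; first exact: stabilizer_compact.
  exact: compact_open_stabilizer_open _ cA oA.
exact: stabilizer_subgroup.
Qed.

Section haar_subgroup.
Context {R : realType} {G : topologicalZmodType}.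
Context {mu : {measure set (Borel G) -> \bar R}}.
Hypothesis hmu : haar_measure mu.

Lemma open_measurable_Borel (U : set G) : open U -> measurable (U : set (Borel G)).
Proof. by move=> oU; apply: sub_sigma_algebra. Qed.

Lemma compact_measurable_Borel (K : set G) :
  hausdorff_space G -> compact K -> measurable (K : set (Borel G)).
Proof.
move=> hG cK; rewrite -[K]setCK; apply: measurableC; apply: open_measurable_Borel.
exact/closed_openC/(compact_closed hG cK).
Qed.

Lemma haar_coset_union (V : set G) (v : R) :
  open V -> subgroup V -> mu V = v%:E ->
  forall s : seq G, exists n : nat,
    mu (\bigcup_(x in [set` s]) coset V x) = (n%:R * v)%:E.
Proof.
move=> oV sgV muV; have [_ _ _ _ muT] := hmu.
have muC x : mu (coset V x) = v%:E.
  by rewrite -muV; exact: muT (open_measurable_Borel _ oV).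
elim => [|x s [n IH]].
  by exists 0%N; rewrite bigcup_seq big_nil measure0 mul0r.
rewrite bigcup_seq big_cons -bigcup_seq.
set U := \bigcup_(y in [set` s]) coset V y in IH *.
have [[y ys meet]|disj] :=
  pselect (exists2 y, y \in s & coset V x `&` coset V y !=set0).
  exists n; rewrite setUidr // => z /(coset_meet_sub _ _ _ sgV meet) Cyz.
  by exists y.
have mU : measurable (U : set (Borel G)).
  by apply: open_measurable_Borel; apply: bigcup_open => y _; exact: open_coset.
exists n.+1; rewrite measureU //.
- transitivity (v%:E + (n%:R * v)%:E).
    by congr (_ + _); [exact: muC | exact: IH].
  by rewrite -EFinD mulrS mulrDl mul1r.
- by apply: open_measurable_Borel; exact: open_coset.
- rewrite -subset0 => z [Cxz [y ys Cyz]].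
  by apply: disj; exists y => //; exists z.
Qed.

Lemma haar_subgroup_index (H V : set G) (v : R) :
  open V -> subgroup V -> mu V = v%:E -> compact H -> subgroup H -> V `<=` H ->
  exists n : nat, mu H = (n%:R * v)%:E.
Proof.
move=> oV sgV muV cH sgH VH.
have [s [sH Hs]] := compact_coset_cover _ _ cH oV sgV.1.
have [n muU] := haar_coset_union _ _ oV sgV muV s.
suff -> : H = \bigcup_(x in [set` s]) coset V x by exists n.
apply/seteqP; split => // z [x xs [y Vy <-]].
exact: subgroupD (sH x xs) (VH y Vy).
Qed.

Lemma haar_open_subgroup_gt0 (V : set G) :
  hausdorff_space G -> open V -> subgroup V -> (0 < mu V)%E.
Proof.
move=> hG oV sgV; have [_ _ muI [U [oU muU_gt0]] _] := hmu.
rewrite lt0e measure_ge0 andbT; apply/eqP => muV0.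
suff : (mu U <= 0)%E by rewrite leNgt muU_gt0.
rewrite (muI U oU); apply: ge_ereal_sup => _ [K [cK _] <-].
have [s [_ Ks]] := compact_coset_cover _ _ cK oV sgV.1.
have [n muU] := haar_coset_union _ 0 oV sgV muV0 s.
apply: (@le_trans _ _ (mu (\bigcup_(x in [set` s]) coset V x))); last first.
  by rewrite muU mulr0.
apply: le_measure => //; apply/mem_set; first exact: compact_measurable_Borel.
by apply: open_measurable_Borel; apply: bigcup_open => y _; exact: open_coset.
Qed.

Lemma haar_open_subgroup_measure (V K : set G) :
  hausdorff_space G -> open V -> subgroup V -> compact K -> V `<=` K ->
  exists2 v : R, 0 < v & mu V = v%:E.
Proof.
move=> hG oV sgV cK VK; have [muK _ _ _ _] := hmu.
have muV_gt0 := haar_open_subgroup_gt0 _ hG oV sgV.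
have muV_lt : (mu V < +oo)%E.
  apply: le_lt_trans (muK K cK); apply: le_measure => //; apply/mem_set.
    exact: open_measurable_Borel.
  exact: compact_measurable_Borel.
by case: (mu V) muV_gt0 muV_lt => [v|//|//]; rewrite lte_fin => v0 _; exists v.
Qed.

End haar_subgroup.

Theorem proposition2p8 (R : realType) (G : topologicalZmodType) :
  LCA_group G ->
  compact (@identity_component G) ->
  forall (alpha : G -> G), topological_automorphism alpha ->
  forall (mu : {measure set (Borel G) -> \bar R}), haar_measure mu ->
  forall c : R, 0 < c ->
    (forall S : set (Borel G), measurable S -> mu (alpha @` S) = (c%:E * mu S)%E) ->
  exists q : rat, c = ratr q.
Proof.
move=> LCAG cG0 alpha aut mu hmu c _ hc.
have [H [cH oH sgH]] := LCA_compact_open_subgroup LCAG cG0.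
have [cαH oαH sgαH] := automorphism_compact_open_subgroup _ _ aut cH oH sgH.
pose V := H `&` alpha @` H.
have oV : open V := openI oH oαH.
have sgV : subgroup V := subgroupI _ _ sgH sgαH.
have [v v_gt0 muV] :=
  haar_open_subgroup_measure hmu _ _ LCAG.1 oV sgV cH (@subIsetl _ _ _).
have [m muH] := haar_subgroup_index hmu _ _ _ oV sgV muV cH sgH (@subIsetl _ _ _).
have [n muαH] :=
  haar_subgroup_index hmu _ _ _ oV sgV muV cαH sgαH (@subIsetr _ _ _).
have m_neq0 : m%:R != 0 :> R.
  have : (mu V <= mu H)%E.
    apply: le_measure; last exact: subIsetl.
      by apply/mem_set; exact: open_measurable_Borel.
    by apply/mem_set; exact: open_measurable_Borel.
  rewrite muV muH lee_fin; apply: contraTneq => ->.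
  by rewrite mul0r -ltNge.
have := hc H (open_measurable_Borel _ oH); rewrite muαH muH -EFinM => -[cmn].
exists (n%:R / m%:R); rewrite fmorph_div /= !rmorph_nat.
apply: (mulIf m_neq0); rewrite divfK //.
by apply: (mulIf (lt0r_neq0 v_gt0)); rewrite cmn mulrA.
Qed.
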